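(* Let $P'$ be any transition kernel, i.e. $P'\in\mathbb R_+^{\mathcal S\times\mathcal A\times\mathcal S}$ with $\sum_{s'}P'(s'|s,a)=1$ for all $s,a$, and let $\pi:\mathcal S\to\Delta(\mathcal A)$ be any stationary policy. Then $\|\rho^{P,\pi}-\rho^{P',\pi}\|_1\le\frac{1}{\alpha S}\sum_{s\in\mathcal S,a\in\mathcal A}\rho^{P',\pi}(s,a)\sum_{s'\in\mathcal S}|P(s'|s,a)-P'(s'|s,a)|$.
   Context: $\mathcal S,\mathcal A$ finite with $S=|\mathcal S|$; $P$ is a transition kernel with $P(s'|s,a)\ge\alpha>0$ for all $s,s',a$. For a transition kernel $Q$ and stationary policy $\pi$, the state-action occupancy measure is $\rho^{Q,\pi}(s,a)=\lim_{T\to\infty}\frac1T\sum_{t=1}^T\Pr(s^t=s,a^t=a)$ for the process $a^t\sim\pi(\cdot|s^t)$, $s^{t+1}\sim Q(\cdot|s^t,a^t)$; equivalently $\rho^{Q,\pi}(s,a)=\nu^{Q,\pi}(s)\pi(a|s)$ with $\nu^{Q,\pi}$ the corresponding long-run state frequencies, which form a stationary distribution of the chain $Q^\pi(s'|s)=\sum_a Q(s'|s,a)\pi(a|s)$. *)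

From HB Require Import structures.
From mathcomp Require Import all_boot all_order all_algebra.
From mathcomp Require Import all_classical all_reals all_analysis.
Set Implicit Arguments. Unset Strict Implicit. Unset Printing Implicit Defensive.
Import Order.TTheory GRing.Theory Num.Theory.
Import numFieldNormedType.Exports.
Local Open Scope ring_scope.
Local Open Scope classical_set_scope.

Section Defs.
Variables (R : realType) (S A : finType).

(* Q s a s' stands for Q(s'|s,a) *)
Definition is_kernel (Q : S -> A -> S -> R) : Prop :=
  (forall s a s', 0 <= Q s a s') /\ (forall s a, \sum_(s' : S) Q s a s' = 1).

Definition is_policy (pi : S -> A -> R) : Prop :=
  (forall s a, 0 <= pi s a) /\ (forall s, \sum_(a : A) pi s a = 1).

Definition is_distr (mu : S -> R) : Prop :=
  (forall s, 0 <= mu s) /\ \sum_(s : S) mu s = 1.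

(* law of s^{t+1} for the process started from s^1 ~ mu0,
   a^t ~ pi(.|s^t), s^{t+1} ~ Q(.|s^t,a^t) *)
Fixpoint state_law (Q : S -> A -> S -> R) (pi : S -> A -> R) (mu0 : S -> R)
  (t : nat) : S -> R :=
  match t with
  | O => mu0
  | t'.+1 => fun s' => \sum_(s : S) \sum_(a : A)
       state_law Q pi mu0 t' s * pi s a * Q s a s'
  end.

(* Cesaro average (1/T) sum_{t=1}^T Pr(s^t = s, a^t = a), indexed by T = n+1 *)
Definition cesaro_occ (Q : S -> A -> S -> R) (pi : S -> A -> R) (mu0 : S -> R)
  (s : S) (a : A) (n : nat) : R :=
  (n.+1%:R)^-1 * \sum_(t < n.+1) state_law Q pi mu0 t s * pi s a.

Definition is_occupancy (Q : S -> A -> S -> R) (pi : S -> A -> R) (mu0 : S -> R)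
  (rho : S -> A -> R) : Prop :=
  forall s a, cesaro_occ Q pi mu0 s a @ \oo --> rho s a.

End Defs.

From HB Require Import structures.
From mathcomp Require Import all_boot all_order all_algebra.
From mathcomp Require Import all_classical all_reals all_analysis.
From mathcomp Require Import ring lra.
Import Order.TTheory GRing.Theory Num.Theory.
Import numFieldNormedType.Exports.
Local Open Scope ring_scope.
Local Open Scope classical_set_scope.

(* Let M = P^pi and M' = P'^pi be the state chains induced by pi, and nu, nu'
   the state marginals of rho, rho'.  The Cesaro average of the state laws and
   its one-step image under M differ by (L_(n+1) - L_0) / (n+1), so in the
   limit rho = nu * pi and nu M = nu; likewise for nu'.  Since d = nu - nu'
   sums to zero, d = d (M - alpha) + nu' (M - M'), where M - alpha is
   nonnegative with row sums 1 - alpha S.  Taking l1 norms,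
   |d| <= (1 - alpha S) |d| + sum_s nu'(s) |M(s,.) - M'(s,.)|, and
   |M(s,.) - M'(s,.)| <= sum_a pi(a|s) |P(.|s,a) - P'(.|s,a)|. *)

Lemma cvgr_sum {R : realType} {I : finType} {f : I -> nat -> R} {l : I -> R} :
  (forall i, f i @ \oo --> l i) ->
  (fun n => \sum_(i : I) f i n) @ \oo --> \sum_(i : I) l i.
Proof. by move=> fl; apply: cvg_big => //; exact: add_continuous. Qed.

Definition is_stationary {R : realType} {S : finType} (M : S -> S -> R)
  (nu : S -> R) : Prop :=
  forall s', nu s' = \sum_(s : S) nu s * M s s'.

Section StationaryPerturbation.
Context {R : realType} {S : finType} {alpha : R}.
Context {M M' : S -> S -> R} {nu nu' : S -> R}.
Hypotheses (M_ge : forall s s', alpha <= M s s')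
  (M_sum1 : forall s, \sum_(s' : S) M s s' = 1).
Hypotheses (nuM : is_stationary M nu) (nuM' : is_stationary M' nu')
  (nu'_ge0 : forall s, 0 <= nu' s) (sum_nu : \sum_(s : S) nu s = \sum_(s : S) nu' s).

Lemma stationary_diffE s' :
  nu s' - nu' s' = \sum_(s : S) (nu s - nu' s) * (M s s' - alpha)
                   + \sum_(s : S) nu' s * (M s s' - M' s s').
Proof.
have sum_diff0 : \sum_(s : S) (nu s - nu' s) * alpha = 0.
  by rewrite -mulr_suml sumrB sum_nu subrr mul0r.
under eq_bigr do rewrite mulrBr.
rewrite sumrB sum_diff0 subr0 {1}nuM {1}nuM' -sumrB -big_split /=.
by apply: eq_bigr => s _; ring.
Qed.

Lemma stationary_diff_le s' :
  `|nu s' - nu' s'| <= \sum_(s : S) `|nu s - nu' s| * (M s s' - alpha)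
                       + \sum_(s : S) nu' s * `|M s s' - M' s s'|.
Proof.
rewrite stationary_diffE; apply: (le_trans (ler_normD _ _)).
apply: lerD; apply: (le_trans (ler_norm_sum _ _ _)); apply: ler_sum => s _.
  by rewrite normrM (ger0_norm (_ : 0 <= M s s' - alpha)) // subr_ge0.
by rewrite normrM ger0_norm.
Qed.

Lemma stationary_perturbation_l1 :
  alpha * #|S|%:R * \sum_(s : S) `|nu s - nu' s|
    <= \sum_(s : S) nu' s * \sum_(s' : S) `|M s s' - M' s s'|.
Proof.
set D := \sum_(s : S) _.
have rows : \sum_(s' : S) \sum_(s : S) `|nu s - nu' s| * (M s s' - alpha)
            = D * (1 - alpha * #|S|%:R).
  rewrite exchange_big /= /D mulr_suml; apply: eq_bigr => s _.
  by rewrite -mulr_sumr sumrB M_sum1 sumr_const -[alpha *+ _]mulr_natr.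
have D_le : D <= D * (1 - alpha * #|S|%:R)
                 + \sum_(s : S) nu' s * \sum_(s' : S) `|M s s' - M' s s'|.
  apply: le_trans (ler_sum _ (fun s' _ => stationary_diff_le s')) _.
  rewrite big_split /= rows exchange_big /=.
  by under [X in _ + X]eq_bigr do rewrite -mulr_sumr.
by move: D_le; rewrite mulrBr mulr1 addrAC -addrA lerDl subr_ge0 mulrC.
Qed.

End StationaryPerturbation.

Section PolicyChain.
Context {R : realType} {S A : finType}.
Variables (Q : S -> A -> S -> R) (pi : S -> A -> R).
Hypotheses (hQ : is_kernel Q) (hpi : is_policy pi).

Definition policy_chain (s s' : S) : R := \sum_(a : A) pi s a * Q s a s'.

Lemma policy_chain_ge0 s s' : 0 <= policy_chain s s'.
Proof.
by apply: sumr_ge0 => a _; rewrite mulr_ge0 //; [exact: hpi.1 | exact: hQ.1].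
Qed.

Lemma policy_chain_ge c :
  (forall s a s', c <= Q s a s') -> forall s s', c <= policy_chain s s'.
Proof.
move=> Q_ge s s'; rewrite -[c]mul1r -(hpi.2 s) mulr_suml.
by apply: ler_sum => a _; rewrite ler_wpM2l //; exact: hpi.1.
Qed.

Lemma policy_chain_sum1 s : \sum_(s' : S) policy_chain s s' = 1.
Proof.
rewrite exchange_big /= -(hpi.2 s); apply: eq_bigr => a _.
by rewrite -mulr_sumr hQ.2 mulr1.
Qed.

Section InitialLaw.
Variable mu0 : S -> R.
Hypothesis mu0_distr : is_distr mu0.

Let L := state_law Q pi mu0.

Lemma state_lawS t s' : L t.+1 s' = \sum_(s : S) L t s * policy_chain s s'.
Proof.
by apply: eq_bigr => s _; rewrite mulr_sumr; apply: eq_bigr => a _; rewrite mulrA.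
Qed.

Lemma state_law_distr t : is_distr (L t).
Proof.
elim: t => [|t [L_ge0 L_sum1]] //; split=> [s'|].
  by rewrite state_lawS; apply: sumr_ge0 => s _; rewrite mulr_ge0 ?policy_chain_ge0.
under eq_bigr do rewrite state_lawS.
rewrite exchange_big /= -L_sum1; apply: eq_bigr => s _.
by rewrite -mulr_sumr policy_chain_sum1 mulr1.
Qed.

Lemma state_law_bounds t s : 0 <= L t s <= 1.
Proof.
have [L_ge0 L_sum1] := state_law_distr t.
rewrite L_ge0 /= -L_sum1 (bigD1 s) //= lerDl.
by apply: sumr_ge0 => s' _; exact: L_ge0.
Qed.

Definition cesaro_law (s : S) (n : nat) : R :=
  (n.+1%:R)^-1 * \sum_(t < n.+1) L t s.

Lemma cesaro_occE s a n : cesaro_occ Q pi mu0 s a n = cesaro_law s n * pi s a.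
Proof. by rewrite /cesaro_occ /cesaro_law -mulrA mulr_suml. Qed.

Lemma cesaro_law_ge0 s n : 0 <= cesaro_law s n.
Proof.
rewrite mulr_ge0 ?invr_ge0 //.
by apply: sumr_ge0 => t _; case/andP: (state_law_bounds t s).
Qed.

Lemma cesaro_law_sum1 n : \sum_(s : S) cesaro_law s n = 1.
Proof.
rewrite -mulr_sumr exchange_big /=.
under eq_bigr do rewrite (state_law_distr _).2.
by rewrite sumr_const card_ord mulVf.
Qed.

Lemma cesaro_law_drift n s' :
  \sum_(s : S) cesaro_law s n * policy_chain s s' - cesaro_law s' n
    = (n.+1%:R)^-1 * (L n.+1 s' - L 0 s').
Proof.
have image : \sum_(s : S) cesaro_law s n * policy_chain s s'
             = (n.+1%:R)^-1 * \sum_(t < n.+1) L t.+1 s'.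
  under eq_bigr do rewrite /cesaro_law -mulrA mulr_suml.
  rewrite -mulr_sumr exchange_big /=; congr (_ * _).
  by apply: eq_bigr => t _; rewrite state_lawS.
rewrite image /cesaro_law -mulrBr -sumrB.
by rewrite -(big_mkord xpredT (fun t => L t.+1 s' - L t s')) telescope_sumr.
Qed.

Lemma cesaro_law_drift_le n s' :
  `|\sum_(s : S) cesaro_law s n * policy_chain s s' - cesaro_law s' n|
    <= (n.+1%:R)^-1.
Proof.
rewrite cesaro_law_drift normrM ger0_norm ?invr_ge0 //.
have /andP[L1_ge0 L1_le1] := state_law_bounds n.+1 s'.
have /andP[L0_ge0 L0_le1] := state_law_bounds 0 s'.
by rewrite ler_piMr ?invr_ge0 // ler_norml; apply/andP; split; lra.
Qed.

Section Occupancy.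
Variable rho : S -> A -> R.
Hypothesis rho_occ : is_occupancy Q pi mu0 rho.

Definition state_marginal (s : S) : R := \sum_(a : A) rho s a.

Lemma cesaro_law_cvg s : cesaro_law s @ \oo --> state_marginal s.
Proof.
have -> : cesaro_law s = fun n => \sum_(a : A) cesaro_occ Q pi mu0 s a n.
  apply/funext => n; under eq_bigr do rewrite cesaro_occE.
  by rewrite -mulr_sumr hpi.2 mulr1.
by apply: cvgr_sum => a; exact: rho_occ.
Qed.

Lemma occupancy_factor s a : rho s a = state_marginal s * pi s a.
Proof.
apply: (norm_cvg_unique (rho_occ s a)).
rewrite /= (eq_cvg \oo _ (cesaro_occE s a)).
by apply: cvgM; [exact: cesaro_law_cvg | exact: cvg_cst].
Qed.

Lemma state_marginal_distr : is_distr state_marginal.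
Proof.
split=> [s|].
  apply: (cvgr_to_ge (cesaro_law_cvg s)).
  by apply: nearW => n; exact: cesaro_law_ge0.
apply: (norm_cvg_unique (cvgr_sum cesaro_law_cvg)).
rewrite /= (eq_cvg \oo _ cesaro_law_sum1).
exact: cvg_cst.
Qed.

Lemma state_marginal_stationary : is_stationary policy_chain state_marginal.
Proof.
move=> s'; set nu := state_marginal.
pose drift n := \sum_(s : S) cesaro_law s n * policy_chain s s' - cesaro_law s' n.
have drift_cvg : drift @ \oo --> \sum_(s : S) nu s * policy_chain s s' - nu s'.
  apply: cvgB; last exact: cesaro_law_cvg.
  by apply: cvgr_sum => s; apply: cvgM; [exact: cesaro_law_cvg | exact: cvg_cst].
have drift_cvg0 : drift @ \oo --> 0.
  rewrite -oppr0; apply: (squeeze_cvgr _ (cvgN (@cvg_harmonic R))); last first.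
    by rewrite oppr0; exact: cvg_harmonic.
  by apply: nearW => n; rewrite -ler_norml; exact: cesaro_law_drift_le.
apply/eqP; rewrite eq_sym -subr_eq0; apply/eqP.
exact: (norm_cvg_unique drift_cvg drift_cvg0).
Qed.

End Occupancy.
End InitialLaw.
End PolicyChain.

Lemma policy_chain_l1_le {R : realType} {S A : finType}
    (P P' : S -> A -> S -> R) (pi : S -> A -> R) s :
  (forall a, 0 <= pi s a) ->
  \sum_(s' : S) `|policy_chain P pi s s' - policy_chain P' pi s s'|
    <= \sum_(a : A) pi s a * \sum_(s' : S) `|P s a s' - P' s a s'|.
Proof.
move=> pi_ge0; rewrite /policy_chain; under eq_bigr do rewrite -sumrB.
apply: le_trans (ler_sum _ (fun s' _ => ler_norm_sum _ _ _)) _.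
rewrite exchange_big /=; apply: ler_sum => a _; rewrite mulr_sumr.
by apply: ler_sum => s' _; rewrite -mulrBr normrM ger0_norm.
Qed.

Theorem lemma8 (R : realType) (S A : finType) (alpha : R)
  (P P' : S -> A -> S -> R) (pi : S -> A -> R) (mu0 mu0' : S -> R)
  (rho rho' : S -> A -> R) :
  0 < alpha ->
  is_kernel P -> (forall s a s', alpha <= P s a s') ->
  is_kernel P' ->
  is_policy pi ->
  is_distr mu0 -> is_distr mu0' ->
  is_occupancy P pi mu0 rho ->
  is_occupancy P' pi mu0' rho' ->
  \sum_(s : S) \sum_(a : A) `|rho s a - rho' s a|
    <= (alpha * #|S|%:R)^-1 *
       \sum_(s : S) \sum_(a : A)
          (rho' s a * \sum_(s' : S) `|P s a s' - P' s a s'|).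
Proof.
move=> alpha_gt0 hP P_ge hP' hpi mu0_distr mu0'_distr rho_occ rho'_occ.
have rhoE := occupancy_factor P pi hpi mu0 rho rho_occ.
have rho'E := occupancy_factor P' pi hpi mu0' rho' rho'_occ.
have [_ nu_sum1] := state_marginal_distr P pi hP hpi mu0 mu0_distr rho rho_occ.
have [nu'_ge0 nu'_sum1] :=
  state_marginal_distr P' pi hP' hpi mu0' mu0'_distr rho' rho'_occ.
have l1E : \sum_(s : S) \sum_(a : A) `|rho s a - rho' s a|
           = \sum_(s : S) `|state_marginal rho s - state_marginal rho' s|.
  apply: eq_bigr => s _.
  under eq_bigr do rewrite rhoE rho'E -mulrBl normrM (ger0_norm (hpi.1 s _)).
  by rewrite -mulr_sumr hpi.2 mulr1.
have chain_le :
    \sum_(s : S) state_marginal rho' s *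
      \sum_(s' : S) `|policy_chain P pi s s' - policy_chain P' pi s s'|
    <= \sum_(s : S) \sum_(a : A)
         (rho' s a * \sum_(s' : S) `|P s a s' - P' s a s'|).
  apply: ler_sum => s _; under [X in _ <= X]eq_bigr do rewrite rho'E -mulrA.
  by rewrite -mulr_sumr ler_wpM2l // policy_chain_l1_le // => a; exact: hpi.1.
have l1_le := stationary_perturbation_l1 (policy_chain_ge P pi hpi alpha P_ge)
  (policy_chain_sum1 P pi hP hpi)
  (state_marginal_stationary P pi hP hpi mu0 mu0_distr rho rho_occ)
  (state_marginal_stationary P' pi hP' hpi mu0' mu0'_distr rho' rho'_occ)
  nu'_ge0 (etrans nu_sum1 (esym nu'_sum1)).
rewrite l1E; have [S_empty|S_gt0] := posnP #|S|.
  rewrite S_empty mulr0 invr0 mul0r big1 // => s _.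
  by have := card0_eq S_empty s; rewrite !inE.
by rewrite ler_pdivlMl ?mulr_gt0 ?ltr0n //; exact: le_trans l1_le chain_le.
Qed.
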